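(* (I) Let $\varepsilon>0$. For all compact metric spaces $(X,d_X)$, $(Y,d_Y)$: $d^\varepsilon_{GH}(X,Y)\le d_{GH}(X,Y)$. (II) Let $\varepsilon,D>0$. If $(X,d_X)$ and $(Y,d_Y)$ are compact length spaces with $\operatorname{diam}(X),\operatorname{diam}(Y)\le D$, then $d_{GH}(X,Y)\le\big(\frac{2D}{\varepsilon}+1\big)d^\varepsilon_{GH}(X,Y)$.
   Context: The $\varepsilon$-truncation of a metric $d$ is $d_\varepsilon(x,y)=\min\{d(x,y),\varepsilon\}$; $d^\varepsilon_{GH}((X,d_X),(Y,d_Y)):=d_{GH}((X,d_{X,\varepsilon}),(Y,d_{Y,\varepsilon}))$ where $d_{GH}$ is the Gromov–Hausdorff distance. A length space is a metric space whose distance equals the infimum of lengths of connecting curves. *)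

From Stdlib Require Import Reals.
From Coquelicot Require Import Coquelicot.
Open Scope R_scope.

Definition is_metric {X : Type} (d : X -> X -> R) : Prop :=
  (forall x y, 0 <= d x y) /\
  (forall x y, d x y = 0 <-> x = y) /\
  (forall x y, d x y = d y x) /\
  (forall x y z, d x z <= d x y + d y z).

Definition m_open {X : Type} (d : X -> X -> R) (U : X -> Prop) : Prop :=
  forall x, U x -> exists r, 0 < r /\ forall y, d x y < r -> U y.

Definition m_compact {X : Type} (d : X -> X -> R) : Prop :=
  forall (I : Type) (U : I -> X -> Prop),
    (forall i, m_open d (U i)) ->
    (forall x, exists i, U i x) ->
    exists l : list I, forall x, exists i, List.In i l /\ U i x.

Definition compact_metric_space {X : Type} (d : X -> X -> R) : Prop :=
  is_metric d /\ m_compact d.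

Definition trunc {X : Type} (eps : R) (d : X -> X -> R) : X -> X -> R :=
  fun x y => Rmin (d x y) eps.

Definition diam {X : Type} (d : X -> X -> R) : Rbar :=
  Lub_Rbar (fun r => exists x y, r = d x y).

Definition isometric_emb {X Z : Type} (dX : X -> X -> R) (dZ : Z -> Z -> R)
  (f : X -> Z) : Prop := forall x x', dZ (f x) (f x') = dX x x'.

Definition hausdorff {Z : Type} (dZ : Z -> Z -> R) (A B : Z -> Prop) : Rbar :=
  Glb_Rbar (fun r => 0 <= r /\
    (forall a, A a -> exists b, B b /\ dZ a b <= r) /\
    (forall b, B b -> exists a, A a /\ dZ a b <= r)).

Definition dGH {X Y : Type} (dX : X -> X -> R) (dY : Y -> Y -> R) : Rbar :=
  Glb_Rbar (fun r => exists (Z : Type) (dZ : Z -> Z -> R) (f : X -> Z) (g : Y -> Z),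
    is_metric dZ /\ isometric_emb dX dZ f /\ isometric_emb dY dZ g /\
    hausdorff dZ (fun z => exists x, z = f x) (fun z => exists y, z = g y)
      = Finite r).

Definition dGH_eps {X Y : Type} (eps : R) (dX : X -> X -> R) (dY : Y -> Y -> R)
  : Rbar := dGH (trunc eps dX) (trunc eps dY).

(** Curves and their length. A curve is a map [0,1] -> X (given as R -> X,
    only its values on [0,1] matter), continuous on [0,1]. *)
Definition curve_continuous {X : Type} (d : X -> X -> R) (g : R -> X) : Prop :=
  forall t, 0 <= t <= 1 -> forall e, 0 < e -> exists delta, 0 < delta /\
    forall s, 0 <= s <= 1 -> Rabs (s - t) < delta -> d (g s) (g t) < e.

Fixpoint psum {X : Type} (d : X -> X -> R) (g : R -> X) (t : nat -> R) (n : nat)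
  : R :=
  match n with
  | O => 0
  | S k => psum d g t k + d (g (t k)) (g (t (S k)))
  end.

Definition curve_length {X : Type} (d : X -> X -> R) (g : R -> X) : Rbar :=
  Lub_Rbar (fun s => exists (n : nat) (t : nat -> R),
    t O = 0 /\ t n = 1 /\ (forall i, (i < n)%nat -> t i <= t (S i)) /\
    s = psum d g t n).

Definition length_space {X : Type} (d : X -> X -> R) : Prop :=
  forall x y, Finite (d x y) =
    Glb_Rbar (fun L => exists g : R -> X,
      curve_continuous d g /\ g 0 = x /\ g 1 = y /\ curve_length d g = Finite L).

(* Gromov-Hausdorff distance is controlled by correspondences: an embedding at
   Hausdorff distance < r yields a correspondence of distortion <= 2r, and a
   correspondence of distortion <= 2c yields, by gluing X and Y along it, an
   embedding at Hausdorff distance <= c + e for every e > 0.  Truncating both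
   metrics at eps does not increase distortion, which gives (I).
   For (II), let R have eps-truncated distortion <= 2r.  Pairs at distance
   below eps - 2r are not affected by truncation, and in a length space any two
   points at distance <= D are joined by a chain of n <= 2D/eps + 1 steps of
   length < eps/2, so true distances differ by at most 2nr when r < eps/4; for
   r >= eps/4 the diameter bound alone suffices. *)

From Stdlib Require Import Reals Lra Classical ZArith.
From Coquelicot Require Import Coquelicot.
Open Scope R_scope.

Lemma Glb_Rbar_le_elem (S : R -> Prop) (v : R) : S v -> Rbar_le (Glb_Rbar S) (Finite v).
Proof. intros Hv. exact (proj1 (Glb_Rbar_correct S) v Hv). Qed.

Lemma Glb_Rbar_ge_lb (S : R -> Prop) (w : R) :
  (forall v, S v -> w <= v) -> Rbar_le (Finite w) (Glb_Rbar S).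
Proof. intros Hw. apply (proj2 (Glb_Rbar_correct S)). exact Hw. Qed.

Lemma Glb_Rbar_lt_elem (S : R -> Prop) (r : R) :
  Rbar_lt (Glb_Rbar S) (Finite r) -> exists v, S v /\ v < r.
Proof.
  intros Hlt. apply NNPP. intros Hno.
  assert (Hr : Rbar_le (Finite r) (Glb_Rbar S)).
  { apply Glb_Rbar_ge_lb. intros v Hv. apply Rnot_lt_le. intros Hvr. apply Hno. now exists v. }
  now apply (Rbar_lt_not_le _ _ Hlt).
Qed.

Lemma real_Glb_Rbar_spec (S : R -> Prop) (v m : R) :
  S v -> (forall w, S w -> m <= w) ->
  Glb_Rbar S = Finite (real (Glb_Rbar S)) /\
  (forall w, S w -> real (Glb_Rbar S) <= w) /\
  (forall w, (forall u, S u -> w <= u) -> w <= real (Glb_Rbar S)).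
Proof.
  intros Hv Hm.
  pose proof (Glb_Rbar_le_elem S v Hv) as Hup. pose proof (Glb_Rbar_ge_lb S m Hm) as Hlow.
  destruct (Glb_Rbar S) as [g| |] eqn:Eg; simpl in Hup, Hlow; try contradiction.
  split; [reflexivity|split].
  - intros w Hw. pose proof (Glb_Rbar_le_elem S w Hw) as H. now rewrite Eg in H.
  - intros w Hw. pose proof (Glb_Rbar_ge_lb S w Hw) as H. now rewrite Eg in H.
Qed.

Lemma Rbar_le_finite_eps (a : Rbar) (c : R) :
  (forall e, 0 < e -> Rbar_le a (Finite (c + e))) -> Rbar_le a (Finite c).
Proof.
  intros H. destruct a as [a| |]; simpl in *.
  - apply Rle_plus_epsilon. exact H.
  - apply (H 1). lra.
  - exact I.
Qed.

Lemma Rbar_mult_pos_infty (K : R) :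
  0 < K -> Rbar_mult (Finite K) p_infty = p_infty /\ Rbar_mult (Finite K) m_infty = m_infty.
Proof.
  intros HK. unfold Rbar_mult; simpl.
  destruct Rle_dec as [H|H]; [|lra].
  destruct Rle_lt_or_eq_dec; [|lra]. split; reflexivity.
Qed.

Lemma Rbar_mult_1_l (a : Rbar) : Rbar_mult (Finite 1) a = a.
Proof.
  destruct a as [a| |].
  - simpl. now rewrite Rmult_1_l.
  - apply Rbar_mult_pos_infty. lra.
  - apply Rbar_mult_pos_infty. lra.
Qed.

Lemma Rbar_le_mult_of_forall_lt (K : R) (a b : Rbar) :
  0 < K -> (forall r, Rbar_lt a (Finite r) -> Rbar_le b (Finite (K * r))) ->
  Rbar_le b (Rbar_mult (Finite K) a).
Proof.
  intros HK H. destruct (Rbar_mult_pos_infty K HK) as [Kp Km]. destruct a as [a| |].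
  - apply Rbar_le_finite_eps. intros e He.
    replace (K * a + e) with (K * (a + e / K)) by (field; lra).
    apply H. simpl. assert (0 < e / K) by (apply Rdiv_lt_0_compat; lra). lra.
  - rewrite Kp. now destruct b.
  - rewrite Km. destruct b as [b| |]; simpl; [|exact (H 0 I)|exact I].
    specialize (H ((b - 1) / K) I). simpl in H.
    replace (K * ((b - 1) / K)) with (b - 1) in H by (field; lra). lra.
Qed.

Definition correspondence {X Y : Type} (Rel : X -> Y -> Prop) : Prop :=
  (forall x, exists y, Rel x y) /\ (forall y, exists x, Rel x y).

Definition distortion_le {X Y : Type} (dX : X -> X -> R) (dY : Y -> Y -> R)
  (Rel : X -> Y -> Prop) (c : R) : Prop :=
  forall x y x' y', Rel x y -> Rel x' y' -> Rabs (dX x x' - dY y y') <= c.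

Lemma distortion_le_transpose {X Y : Type} (dX : X -> X -> R) (dY : Y -> Y -> R) Rel c :
  distortion_le dX dY Rel c -> distortion_le dY dX (fun y x => Rel x y) c.
Proof. intros H y x y' x' H1 H2. rewrite Rabs_minus_sym. now apply H. Qed.

Lemma trunc_is_metric {X : Type} (d : X -> X -> R) (e : R) :
  0 < e -> is_metric d -> is_metric (trunc e d).
Proof.
  intros He [D0 [D1 [D2 D3]]]. unfold trunc.
  split; [|split; [|split]].
  - intros x y. pose proof (D0 x y). unfold Rmin; destruct Rle_dec; lra.
  - intros x y. rewrite <- D1. unfold Rmin; destruct Rle_dec; split; intros; lra.
  - intros x y. now rewrite D2.
  - intros x y z. pose proof (D3 x y z). pose proof (D0 x y). pose proof (D0 y z).
    unfold Rmin; repeat destruct Rle_dec; lra.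
Qed.

Lemma trunc_distortion_le {X Y : Type} (dX : X -> X -> R) (dY : Y -> Y -> R) Rel c e :
  distortion_le dX dY Rel c -> distortion_le (trunc e dX) (trunc e dY) Rel c.
Proof.
  intros H x y x' y' Hxy Hxy'. pose proof (H x y x' y' Hxy Hxy') as Hd. unfold trunc.
  apply Rabs_le_between in Hd. apply Rabs_le. unfold Rmin; repeat destruct Rle_dec; lra.
Qed.

Lemma dGH_ge0 {X Y : Type} (dX : X -> X -> R) (dY : Y -> Y -> R) :
  Rbar_le (Finite 0) (dGH dX dY).
Proof.
  apply Glb_Rbar_ge_lb. intros v [Z [dZ [f [g [_ [_ [_ Hh]]]]]]].
  assert (H : Rbar_le (Finite 0) (Finite v)).
  { rewrite <- Hh. apply Glb_Rbar_ge_lb. now intros w [Hw _]. }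
  exact H.
Qed.

(* x and y correspond when f x and g y are within q, for some q < r bounding
   the Hausdorff distance of the images. *)
Lemma dGH_lt_correspondence {X Y : Type} (dX : X -> X -> R) (dY : Y -> Y -> R) (r : R) :
  Rbar_lt (dGH dX dY) (Finite r) ->
  exists Rel, correspondence Rel /\ distortion_le dX dY Rel (2 * r).
Proof.
  intros H.
  destruct (Glb_Rbar_lt_elem _ _ H) as [h [[Z [dZ [f [g [HZ [Hf [Hg Hh]]]]]]] Hhr]].
  assert (Hlt : Rbar_lt (hausdorff dZ (fun z => exists x, z = f x) (fun z => exists y, z = g y))
                  (Finite r)) by (rewrite Hh; exact Hhr).
  destruct (Glb_Rbar_lt_elem _ _ Hlt) as [q [[_ [HA HB]] Hqr]].
  destruct HZ as [_ [_ [Z2 Z3]]].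
  exists (fun x y => dZ (f x) (g y) <= q). split; [split|].
  - intros x. destruct (HA (f x) (ex_intro _ x eq_refl)) as [b [[y ->] Hb]]. eauto.
  - intros y. destruct (HB (g y) (ex_intro _ y eq_refl)) as [a [[x ->] Ha]]. eauto.
  - intros x y x' y' H1 H2. rewrite <- (Hf x x'), <- (Hg y y').
    pose proof (Z3 (f x) (g y) (f x')). pose proof (Z3 (g y) (g y') (f x')).
    pose proof (Z3 (g y) (f x) (g y')). pose proof (Z3 (f x) (f x') (g y')).
    rewrite (Z2 (g y) (f x)) in *. rewrite (Z2 (g y') (f x')) in *.
    apply Rabs_le; lra.
Qed.

Section Gluing.

Variables (X Y : Type) (dX : X -> X -> R) (dY : Y -> Y -> R) (Rel : X -> Y -> Prop).
Hypotheses (HX : is_metric dX) (HY : is_metric dY).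
Variable c : R.
Hypothesis Hdist : distortion_le dX dY Rel (2 * c).

Definition glue_gap (x : X) (y : Y) : R :=
  real (Glb_Rbar (fun v => exists a b, Rel a b /\ v = dX x a + dY b y)).

Definition glue_dist (c' : R) (p q : X + Y) : R :=
  match p, q with
  | inl x, inl x' => dX x x'
  | inr y, inr y' => dY y y'
  | inl x, inr y | inr y, inl x => glue_gap x y + c'
  end.

Section GapBounds.

Hypothesis Rel_inhabited : exists a b, Rel a b.

Lemma glue_gap_spec (x : X) (y : Y) :
  (forall a b, Rel a b -> glue_gap x y <= dX x a + dY b y) /\
  (forall w, (forall a b, Rel a b -> w <= dX x a + dY b y) -> w <= glue_gap x y).
Proof.
  destruct Rel_inhabited as [a [b Hab]].
  destruct (real_Glb_Rbar_spec (fun v => exists a b, Rel a b /\ v = dX x a + dY b y)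
              (dX x a + dY b y) 0) as [_ [Hle Hlb]].
  - eauto.
  - intros w [a' [b' [_ ->]]]. pose proof (proj1 HX x a'). pose proof (proj1 HY b' y). lra.
  - split.
    + intros a' b' H. apply Hle. eauto.
    + intros w Hw. apply Hlb. intros u [a' [b' [H ->]]]. now apply Hw.
Qed.

Lemma glue_gap_ge0 (x : X) (y : Y) : 0 <= glue_gap x y.
Proof.
  apply glue_gap_spec. intros a b _.
  pose proof (proj1 HX x a). pose proof (proj1 HY b y). lra.
Qed.

Lemma glue_gap_le_distl (x x' : X) (y : Y) : glue_gap x y <= dX x x' + glue_gap x' y.
Proof.
  enough (glue_gap x y - dX x x' <= glue_gap x' y) by lra.
  apply glue_gap_spec. intros a b H.
  pose proof (proj1 (glue_gap_spec x y) a b H). pose proof (proj2 (proj2 (proj2 HX)) x x' a). lra.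
Qed.

Lemma glue_gap_le_distr (x : X) (y y' : Y) : glue_gap x y <= glue_gap x y' + dY y' y.
Proof.
  enough (glue_gap x y - dY y' y <= glue_gap x y') by lra.
  apply glue_gap_spec. intros a b H.
  pose proof (proj1 (glue_gap_spec x y) a b H). pose proof (proj2 (proj2 (proj2 HY)) b y' y). lra.
Qed.

Lemma le_glue_gap_add (z : R) (x x' : X) (y y' : Y) :
  (forall a b a' b', Rel a b -> Rel a' b' ->
     z <= (dX x a + dY b y) + (dX x' a' + dY b' y')) ->
  z <= glue_gap x y + glue_gap x' y'.
Proof.
  intros H. enough (z - glue_gap x' y' <= glue_gap x y) by lra.
  apply glue_gap_spec. intros a b Hab.
  enough (z - (dX x a + dY b y) <= glue_gap x' y') by lra.
  apply glue_gap_spec. intros a' b' Hab'. pose proof (H a b a' b' Hab Hab'). lra.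
Qed.

Lemma distX_le_glue_gap (x x' : X) (y : Y) :
  dX x x' <= glue_gap x y + glue_gap x' y + 2 * c.
Proof.
  enough (dX x x' - 2 * c <= glue_gap x y + glue_gap x' y) by lra.
  apply le_glue_gap_add. intros a b a' b' H H'.
  destruct HX as [_ [_ [X2 X3]]]. destruct HY as [_ [_ [Y2 Y3]]].
  pose proof (proj1 (Rabs_le_between _ _) (Hdist a b a' b' H H')).
  pose proof (X3 x a x'). pose proof (X3 a a' x'). pose proof (Y3 b y b').
  rewrite (X2 a' x') in *. rewrite (Y2 y b') in *. lra.
Qed.

Lemma distY_le_glue_gap (x : X) (y y' : Y) :
  dY y y' <= glue_gap x y + glue_gap x y' + 2 * c.
Proof.
  enough (dY y y' - 2 * c <= glue_gap x y + glue_gap x y') by lra.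
  apply le_glue_gap_add. intros a b a' b' H H'.
  destruct HX as [_ [_ [X2 X3]]]. destruct HY as [_ [_ [Y2 Y3]]].
  pose proof (proj1 (Rabs_le_between _ _) (Hdist a b a' b' H H')).
  pose proof (Y3 y b y'). pose proof (Y3 b b' y'). pose proof (X3 a x a').
  rewrite (Y2 y b) in *. rewrite (X2 a x) in *. lra.
Qed.

End GapBounds.

Hypothesis Hcorr : correspondence Rel.

Lemma glue_dist_is_metric (c' : R) : c < c' -> is_metric (glue_dist c').
Proof.
  intros Hc. destruct HX as [X0 [X1 [X2 X3]]]. destruct HY as [Y0 [Y1 [Y2 Y3]]].
  assert (Hne : forall p : X + Y, exists a b, Rel a b).
  { intros [x|y].
    - destruct (proj1 Hcorr x) as [y Hy]. eauto.
    - destruct (proj2 Hcorr y) as [x Hx]. eauto. }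
  assert (Hc0 : forall p : X + Y, 0 <= c).
  { intros p. destruct (Hne p) as [a [b Hab]].
    pose proof (Hdist a b a b Hab Hab). pose proof (Rabs_pos (dX a a - dY b b)). lra. }
  split; [|split; [|split]].
  - intros [x|y] [x'|y']; simpl; auto.
    + pose proof (glue_gap_ge0 (Hne (inl x)) x y'). pose proof (Hc0 (inl x)). lra.
    + pose proof (glue_gap_ge0 (Hne (inl x')) x' y). pose proof (Hc0 (inl x')). lra.
  - intros [x|y] [x'|y']; simpl.
    + rewrite X1. split; [congruence|]. now intros [= ->].
    + pose proof (glue_gap_ge0 (Hne (inl x)) x y'). pose proof (Hc0 (inl x)).
      split; [lra|discriminate].
    + pose proof (glue_gap_ge0 (Hne (inl x')) x' y). pose proof (Hc0 (inl x')).
      split; [lra|discriminate].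
    + rewrite Y1. split; [congruence|]. now intros [= ->].
  - intros [x|y] [x'|y']; simpl; auto.
  - intros [x|y] [x'|y'] [x''|y'']; simpl; auto.
    + pose proof (glue_gap_le_distl (Hne (inl x)) x x' y''). lra.
    + pose proof (distX_le_glue_gap (Hne (inl x)) x x'' y'). lra.
    + pose proof (glue_gap_le_distr (Hne (inl x)) x y'' y'). lra.
    + pose proof (glue_gap_le_distl (Hne (inl x')) x'' x' y). rewrite X2. lra.
    + pose proof (distY_le_glue_gap (Hne (inl x')) x' y y''). lra.
    + pose proof (glue_gap_le_distr (Hne (inl x'')) x'' y y'). rewrite Y2. lra.
Qed.

(* Each point is glued at distance exactly c' to its partners, so the Hausdorff
   distance between the two copies is at most c'; let c' decrease to c. *)
Lemma correspondence_dGH_le : 0 <= c -> Rbar_le (dGH dX dY) (Finite c).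
Proof.
  intros Hc0. apply Rbar_le_finite_eps. intros e He.
  pose proof HX as [_ [X1 _]]. pose proof HY as [_ [Y1 _]].
  assert (Hpartner : forall x y, Rel x y -> glue_gap x y + (c + e) <= c + e).
  { intros x y Hxy.
    pose proof (proj1 (glue_gap_spec (ex_intro _ x (ex_intro _ y Hxy)) x y) x y Hxy).
    rewrite (proj2 (X1 x x) eq_refl), (proj2 (Y1 y y) eq_refl) in *. lra. }
  set (S := fun r => 0 <= r /\
    (forall a, (exists x, a = @inl X Y x) ->
       exists b, (exists y, b = @inr X Y y) /\ glue_dist (c + e) a b <= r) /\
    (forall b, (exists y, b = @inr X Y y) ->
       exists a, (exists x, a = @inl X Y x) /\ glue_dist (c + e) a b <= r)).
  assert (HS : S (c + e)).
  { split; [lra|split].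
    - intros a [x ->]. destruct (proj1 Hcorr x) as [y Hy].
      exists (inr y). split; [eauto|]. now apply Hpartner.
    - intros b [y ->]. destruct (proj2 Hcorr y) as [x Hx].
      exists (inl x). split; [eauto|]. now apply Hpartner. }
  destruct (real_Glb_Rbar_spec S (c + e) 0 HS) as [Hfin [Hle _]]; [now intros w [Hw _]|].
  apply Rbar_le_trans with (Finite (real (Glb_Rbar S))); [|apply Hle, HS].
  apply Glb_Rbar_le_elem. exists (X + Y)%type, (glue_dist (c + e)), inl, inr.
  split; [apply glue_dist_is_metric; lra|].
  split; [now intros x x'|split; [now intros y y'|exact Hfin]].
Qed.

End Gluing.

Lemma dGH_trunc_le {X Y : Type} (dX : X -> X -> R) (dY : Y -> Y -> R) (e : R) :
  0 < e -> is_metric dX -> is_metric dY ->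
  Rbar_le (dGH (trunc e dX) (trunc e dY)) (dGH dX dY).
Proof.
  intros He HX HY. rewrite <- Rbar_mult_1_l.
  apply Rbar_le_mult_of_forall_lt; [lra|]. intros r Hr. rewrite Rmult_1_l.
  destruct (dGH_lt_correspondence dX dY r Hr) as [Rel [Hcorr Hdist]].
  assert (Hr0 : 0 <= r).
  { pose proof (dGH_ge0 dX dY) as H0. destruct (dGH dX dY); simpl in *; lra. }
  apply (correspondence_dGH_le _ _ _ _ Rel); auto using trunc_is_metric, trunc_distortion_le.
Qed.

Lemma two_point_le_curve_length {X : Type} (d : X -> X -> R) (g : R -> X) (L z : R) :
  curve_length d g = Finite L -> 0 <= z <= 1 -> d (g 0) (g z) + d (g z) (g 1) <= L.
Proof.
  intros HL Hz.
  pose proof (proj1 (Lub_Rbar_correct (fun s => exists (n : nat) (t : nat -> R),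
    t O = 0 /\ t n = 1 /\ (forall i, (i < n)%nat -> t i <= t (S i)) /\
    s = psum d g t n))) as Hub.
  unfold curve_length in HL. rewrite HL in Hub.
  set (t := fun i : nat => match i with O => 0 | S O => z | _ => 1 end).
  assert (H : Rbar_le (Finite (psum d g t 2)) (Finite L)).
  { apply Hub. exists 2%nat, t. repeat split.
    intros [|[|i]] Hi; simpl; lra. }
  simpl in H. lra.
Qed.

(* Extends a curve on [0,1] to a continuous function on R, as needed by IVT. *)
Definition clamp01 (t : R) : R := Rmax 0 (Rmin 1 t).

Lemma clamp01_bounds (t : R) : 0 <= clamp01 t <= 1.
Proof. unfold clamp01, Rmax, Rmin; repeat destruct Rle_dec; lra. Qed.

Lemma clamp01_id (t : R) : 0 <= t <= 1 -> clamp01 t = t.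
Proof. intros H. unfold clamp01, Rmax, Rmin; repeat destruct Rle_dec; lra. Qed.

Lemma clamp01_contract (s t : R) : Rabs (clamp01 s - clamp01 t) <= Rabs (s - t).
Proof.
  unfold clamp01, Rmax, Rmin. apply Rabs_le.
  destruct (Rle_dec 0 (s - t));
    [rewrite (Rabs_right (s - t)) by lra | rewrite (Rabs_left (s - t)) by lra];
    repeat destruct Rle_dec; lra.
Qed.

Lemma continuity_dist_curve {X : Type} (d : X -> X -> R) (g : R -> X) (x : X) :
  is_metric d -> curve_continuous d g -> continuity (fun t => d x (g (clamp01 t))).
Proof.
  intros [_ [_ [D2 D3]]] Hg t e He.
  destruct (Hg (clamp01 t) (clamp01_bounds t) e He) as [delta [Hdelta Hclose]].
  exists delta. split; [lra|]. intros s [_ Hs]. simpl in *. unfold R_dist in *.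
  pose proof (clamp01_contract s t).
  pose proof (Hclose (clamp01 s) (clamp01_bounds s) ltac:(lra)).
  pose proof (D3 x (g (clamp01 s)) (g (clamp01 t))).
  pose proof (D3 x (g (clamp01 t)) (g (clamp01 s))).
  rewrite (D2 (g (clamp01 t)) (g (clamp01 s))) in *.
  apply Rabs_lt_between. lra.
Qed.

(* On a curve from x to x' of length < s + u, the point at distance s from x
   (found by IVT) is at distance < u from x'. *)
Lemma length_space_split {X : Type} (d : X -> X -> R) (x x' : X) (s u : R) :
  is_metric d -> length_space d -> 0 < s < d x x' -> d x x' - s < u ->
  exists m, d x m = s /\ d m x' < u.
Proof.
  intros HM HL Hs Hu.
  assert (Hlt : Rbar_lt (Glb_Rbar (fun L => exists g : R -> X,
      curve_continuous d g /\ g 0 = x /\ g 1 = x' /\ curve_length d g = Finite L))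
      (Finite (s + u))) by (rewrite <- HL; simpl; lra).
  destruct (Glb_Rbar_lt_elem _ _ Hlt) as [L [[g [Hc [G0 [G1 HLg]]]] HLu]].
  destruct (IVT (fun t => d x (g (clamp01 t)) - s) 0 1) as [z [Hz Hzs]].
  - apply continuity_minus; [now apply continuity_dist_curve|apply continuity_const; now intros].
  - lra.
  - rewrite clamp01_id, G0, (proj2 (proj1 (proj2 HM) x x) eq_refl) by lra. lra.
  - rewrite clamp01_id, G1 by lra. lra.
  - exists (g z). rewrite clamp01_id in Hzs by lra. split; [lra|].
    pose proof (two_point_le_curve_length d g L z HLg Hz) as H. rewrite G0, G1 in H. lra.
Qed.

Section Chains.

Variables (X Y : Type) (dX : X -> X -> R) (dY : Y -> Y -> R) (Rel : X -> Y -> Prop).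
Variables (e r : R).
Hypothesis Htrunc : distortion_le (trunc e dX) (trunc e dY) Rel (2 * r).

Lemma dist_le_of_trunc_distortion (a a' : X) (b b' : Y) :
  Rel a b -> Rel a' b' -> dX a a' + 2 * r < e -> dY b b' <= dX a a' + 2 * r.
Proof.
  intros H1 H2 Hsmall. pose proof (Htrunc a b a' b' H1 H2) as H. unfold trunc in H.
  apply Rabs_le_between in H. revert H. unfold Rmin; repeat destruct Rle_dec; intros; lra.
Qed.

Hypotheses (HX : is_metric dX) (HY : is_metric dY) (HLX : length_space dX).
Hypothesis Hleft_total : forall x, exists y, Rel x y.

(* Cut a path from x to x' into n pieces of length below s and transport each
   piece through Rel. *)
Lemma chain_dist_le (s : R) :
  0 <= r -> 0 < s -> s + 2 * r < e ->
  forall n x y x' y', Rel x y -> Rel x' y' -> dX x x' < INR n * s ->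
  dY y y' <= dX x x' + 2 * INR n * r.
Proof.
  intros Hr Hs Hse n. induction n as [|n IH]; intros x y x' y' H1 H2 Hlt.
  - pose proof (proj1 HX x x'). simpl in Hlt. lra.
  - rewrite S_INR in *. pose proof (pos_INR n).
    destruct (Rle_dec (dX x x') s) as [Hle|Hgt].
    + pose proof (dist_le_of_trunc_distortion x x' y y' H1 H2 ltac:(lra)). nra.
    + apply Rle_plus_epsilon. intros eta Heta.
      destruct (length_space_split dX x x' s (Rmin (INR n * s) (dX x x' - s + eta)) HX HLX)
        as [m [Hxm Hmx']]; [lra|apply Rmin_glb_lt; lra|].
      pose proof (Rmin_l (INR n * s) (dX x x' - s + eta)).
      pose proof (Rmin_r (INR n * s) (dX x x' - s + eta)).
      destruct (Hleft_total m) as [ym Hym].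
      pose proof (IH m ym x' y' Hym H2 ltac:(lra)).
      pose proof (dist_le_of_trunc_distortion x m y ym H1 Hym ltac:(lra)).
      pose proof (proj2 (proj2 (proj2 HY)) y ym y'). lra.
Qed.

End Chains.

Lemma dist_le_diam {X : Type} (d : X -> X -> R) (D : R) (x x' : X) :
  Rbar_le (diam d) (Finite D) -> d x x' <= D.
Proof.
  intros H.
  assert (Hx : Rbar_le (Finite (d x x')) (Finite D)).
  { apply Rbar_le_trans with (diam d); [|exact H].
    apply (proj1 (Lub_Rbar_correct (fun r => exists x y, r = d x y))). eauto. }
  exact Hx.
Qed.

Lemma exists_nat_mul_gt (D h : R) :
  0 <= D -> 0 < h -> exists n : nat, D < INR n * h /\ INR n <= D / h + 1.
Proof.
  intros HD Hh. destruct (archimed (D / h)) as [Hup1 Hup2].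
  assert (HDh : 0 <= D / h) by (apply Rdiv_le_0_compat; lra).
  exists (Z.to_nat (up (D / h))).
  rewrite INR_IZR_INZ, Z2Nat.id by (apply le_IZR; simpl; lra).
  split; [|lra].
  replace D with (D / h * h) at 1 by (field; lra).
  apply Rmult_lt_compat_r; lra.
Qed.

(* Chains of steps of length e/2 give the bound when r < e/4; otherwise the
   diameter bound D <= (4r/e) D already suffices. *)
Lemma distortion_le_of_trunc_distortion {X Y : Type} (dX : X -> X -> R) (dY : Y -> Y -> R)
  (Rel : X -> Y -> Prop) (e D r : R) :
  0 < e -> 0 < D -> 0 <= r ->
  is_metric dX -> is_metric dY -> length_space dX -> length_space dY ->
  Rbar_le (diam dX) (Finite D) -> Rbar_le (diam dY) (Finite D) ->
  correspondence Rel -> distortion_le (trunc e dX) (trunc e dY) Rel (2 * r) ->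
  distortion_le dX dY Rel (2 * ((2 * D / e + 1) * r)).
Proof.
  intros He HD Hr HX HY HLX HLY HdX HdY [Hl Hr'] Htrunc x y x' y' H1 H2.
  pose proof (dist_le_diam dX D x x' HdX). pose proof (dist_le_diam dY D y y' HdY).
  pose proof (proj1 HX x x'). pose proof (proj1 HY y y').
  replace (2 * ((2 * D / e + 1) * r)) with (4 * r / e * D + 2 * r) by (field; lra).
  destruct (Rlt_dec r (e / 4)) as [Hsmall|Hlarge].
  - destruct (exists_nat_mul_gt D (e / 2)) as [n [Hn1 Hn2]]; [lra|lra|].
    replace (D / (e / 2)) with (2 * D / e) in Hn2 by (field; lra).
    pose proof (chain_dist_le _ _ dX dY Rel e r Htrunc HX HY HLX Hl (e / 2)
                  Hr ltac:(lra) ltac:(lra) n x y x' y' H1 H2 ltac:(lra)).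
    pose proof (chain_dist_le _ _ dY dX (fun b a => Rel a b) e r
                  (distortion_le_transpose _ _ _ _ Htrunc) HY HX HLY Hr' (e / 2)
                  Hr ltac:(lra) ltac:(lra) n y x y' x' H1 H2 ltac:(lra)).
    assert (INR n * r <= (2 * D / e + 1) * r) by (apply Rmult_le_compat_r; lra).
    replace (4 * r / e * D) with (2 * (2 * D / e * r)) by (field; lra).
    apply Rabs_le. lra.
  - assert (1 <= 4 * r / e).
    { apply Rmult_le_reg_r with e; [lra|]. field_simplify; lra. }
    assert (D <= 4 * r / e * D) by nra.
    apply Rabs_le. lra.
Qed.

Lemma dGH_le_mult_dGH_trunc {X Y : Type} (dX : X -> X -> R) (dY : Y -> Y -> R) (e D : R) :
  0 < e -> 0 < D -> is_metric dX -> is_metric dY -> length_space dX -> length_space dY ->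
  Rbar_le (diam dX) (Finite D) -> Rbar_le (diam dY) (Finite D) ->
  Rbar_le (dGH dX dY) (Rbar_mult (Finite (2 * D / e + 1)) (dGH (trunc e dX) (trunc e dY))).
Proof.
  intros He HD HX HY HLX HLY HdX HdY.
  assert (HK : 0 < 2 * D / e + 1)
    by (assert (0 < 2 * D / e) by (apply Rdiv_lt_0_compat; lra); lra).
  apply Rbar_le_mult_of_forall_lt; [exact HK|]. intros r Hr.
  assert (Hr0 : 0 <= r).
  { pose proof (dGH_ge0 (trunc e dX) (trunc e dY)) as H0.
    destruct (dGH (trunc e dX) (trunc e dY)); simpl in *; lra. }
  destruct (dGH_lt_correspondence _ _ r Hr) as [Rel [Hcorr Htrunc]].
  apply (correspondence_dGH_le _ _ _ _ Rel HX HY); [|exact Hcorr|apply Rmult_le_pos; lra].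
  exact (distortion_le_of_trunc_distortion dX dY Rel e D r He HD Hr0
           HX HY HLX HLY HdX HdY Hcorr Htrunc).
Qed.

Theorem mainTheorem12 :
  (forall (eps : R), 0 < eps ->
     forall (X Y : Type) (dX : X -> X -> R) (dY : Y -> Y -> R),
       compact_metric_space dX -> compact_metric_space dY ->
       Rbar_le (dGH_eps eps dX dY) (dGH dX dY)) /\
  (forall (eps D : R), 0 < eps -> 0 < D ->
     forall (X Y : Type) (dX : X -> X -> R) (dY : Y -> Y -> R),
       compact_metric_space dX -> compact_metric_space dY ->
       length_space dX -> length_space dY ->
       Rbar_le (diam dX) (Finite D) -> Rbar_le (diam dY) (Finite D) ->
       Rbar_le (dGH dX dY)
         (Rbar_mult (Finite (2 * D / eps + 1)) (dGH_eps eps dX dY))).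
Proof.
  split.
  - intros e He X Y dX dY [HX _] [HY _]. now apply dGH_trunc_le.
  - intros e D He HD X Y dX dY [HX _] [HY _]. now apply dGH_le_mult_dGH_trunc.
Qed.
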